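(* The logics $\mathrm{E4}$, $\mathrm{S04}$ and $\mathrm{EMC4}$ have the finite model property, i.e. for each of them there is a class of finite neighborhood frames such that the theorems of the logic are exactly the formulas valid on all frames of that class.
   Context: Modal formulas are built from a countable set $Var$ of propositional variables using $\neg$, $\wedge$ and the unary operator $\Box$. A (modal) logic is a set of formulas containing all classical tautologies and closed under modus ponens, uniform substitution, and the rule (RE): from $\varphi\leftrightarrow\psi$ infer $\Box\varphi\leftrightarrow\Box\psi$. $\mathrm{E}$ is the smallest logic; $\mathrm{L}+\Gamma$ is the smallest logic containing $\mathrm{L}\cup\Gamma$. Axioms: $(4)\ \Box p\to\Box\Box p$; $(\mathrm{T})\ \Box p\to p$; $(\mathrm{M})\ \Box(p\wedge q)\to(\Box p\wedge\Box q)$; $(\mathrm{C})\ (\Box p\wedge\Box q)\to\Box(p\wedge q)$. $\mathrm{E4}=\mathrm{E}+4$, $\mathrm{EMC4}=\mathrm{E4}+\mathrm{M}+\mathrm{C}$, $\mathrm{S04}=\mathrm{E4}+\mathrm{T}+\mathrm{M}$. A neighborhood frame is a pair $(W,\bm{\Box})$ with $W\neq\varnothing$ and $\bm{\Box}:\mathcal P(W)\to\mathcal P(W)$; it is finite if $W$ is finite. A model on it adds a valuation $V:Var\to\mathcal P(W)$. Truth sets: $|p|_M=V(p)$, $|\neg\varphi|_M=W\setminus|\varphi|_M$, $|\varphi\wedge\psi|_M=|\varphi|_M\cap|\psi|_M$, $|\Box\varphi|_M=\bm{\Box}|\varphi|_M$. $\varphi$ is valid on a frame if $|\varphi|_M=W$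 for every model $M$ on it. *)

From mathcomp Require Import all_boot.
Set Implicit Arguments. Unset Strict Implicit. Unset Printing Implicit Defensive.

Inductive form : Type :=
| Var : nat -> form
| Neg : form -> form
| And : form -> form -> form
| Box : form -> form.

Definition Or (a b : form) := Neg (And (Neg a) (Neg b)).
Definition Imp (a b : form) := Neg (And a (Neg b)).
Definition Iff (a b : form) := And (Imp a b) (Imp b a).

(* Classical tautologies: formulas true under every Boolean valuation of
   the propositional variables and of the boxed subformulas (treated as atoms). *)
Fixpoint beval (v : nat -> bool) (vb : form -> bool) (f : form) : bool :=
  match f with
  | Var n => v n
  | Neg a => ~~ beval v vb a
  | And a b => beval v vb a && beval v vb b
  | Box a => vb a
  end.

Definition tautology (f : form) : Prop :=
  forall (v : nat -> bool) (vb : form -> bool), beval v vb f = true.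

Fixpoint subst (s : nat -> form) (f : form) : form :=
  match f with
  | Var n => s n
  | Neg a => Neg (subst s a)
  | And a b => And (subst s a) (subst s b)
  | Box a => Box (subst s a)
  end.

Inductive derivable (G : form -> Prop) : form -> Prop :=
| d_taut f : tautology f -> derivable G f
| d_ax f : G f -> derivable G f
| d_mp f g : derivable G f -> derivable G (Imp f g) -> derivable G g
| d_us s f : derivable G f -> derivable G (subst s f)
| d_re f g : derivable G (Iff f g) -> derivable G (Iff (Box f) (Box g)).

Definition lplus (L G : form -> Prop) : form -> Prop :=
  derivable (fun f => L f \/ G f).

Definition p := Var 0.
Definition q := Var 1.
Definition ax4 := Imp (Box p) (Box (Box p)).
Definition axT := Imp (Box p) p.
Definition axM := Imp (Box (And p q)) (And (Box p) (Box q)).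
Definition axC := Imp (And (Box p) (Box q)) (Box (And p q)).

Definition E : form -> Prop := derivable (fun _ => False).
Definition E4 : form -> Prop := lplus E (fun f => f = ax4).
Definition EMC4 : form -> Prop := lplus E4 (fun f => f = axM \/ f = axC).
Definition S04 : form -> Prop := lplus E4 (fun f => f = axT \/ f = axM).

Record finframe := FinFrame {
  fW : finType;
  fbox : {set fW} -> {set fW};
  fW_nonempty : 0 < #|fW|
}.

Fixpoint truth (F : finframe) (V : nat -> {set fW F}) (f : form) : {set fW F} :=
  match f with
  | Var n => V n
  | Neg a => ~: truth V a
  | And a b => truth V a :&: truth V b
  | Box a => fbox (truth V a)
  end.

Definition valid (F : finframe) (f : form) : Prop :=
  forall V : nat -> {set fW F}, truth V f = [set: fW F].

Definition fmp (L : form -> Prop) : Prop :=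
  exists C : finframe -> Prop,
    forall f, L f <-> (forall F : finframe, C F -> valid F f).

From HB Require Import structures.
From mathcomp Require Import all_boot.
From Stdlib Require Import Classical ClassicalEpsilon.

(* Soundness is routine, so the class of finite frames validating the axioms works,
   provided every non-theorem f of the logic fails on one of them.  Let S be the
   subformulas of f.  The worlds are the consistent truth assignments to S, so each
   a in S has a truth set |a|, and |a| is included in |b| iff a -> b is a theorem.
   Any neighbourhood function sending |a| to |Box a| whenever Box a is in S gives a
   model refuting f.  Call X special if X = |a| with Box a in S, or X = |Box c| with
   Box c in S, and let s(X) be |Box a| in the first case and X in the second; by
   axiom 4, s(X) is included in s(s(X)).  For E4 take Box X = s(X) on special sets
   and the empty set elsewhere; for S04 take the union of the s(Y) over special Y
   included in X; for EMC4 the union of the intersections of the s(Y) over nonempty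
   families of special sets whose intersection is included in X.  Agreement with
   |Box a| then needs M, and for EMC4 also C, to carry a derivation under the box. *)

Set Implicit Arguments. Unset Strict Implicit. Unset Printing Implicit Defensive.

Fixpoint form_eqb (a b : form) : bool :=
  match a, b with
  | Var n, Var m => n == m
  | Neg a, Neg b => form_eqb a b
  | And a1 a2, And b1 b2 => form_eqb a1 b1 && form_eqb a2 b2
  | Box a, Box b => form_eqb a b
  | _, _ => false
  end.

Lemma form_eqP : Equality.axiom form_eqb.
Proof.
elim=> [n|a IH|a1 IH1 a2 IH2|a IH] [m|b|b1 b2|b] /=; try by constructor.
- by apply: (iffP eqP) => [->|[]].
- by apply: (iffP (IH b)) => [->|[]].
- case: (IH1 b1) => [->|ne]; last by constructor => -[].
  by apply: (iffP (IH2 b2)) => [->|[]].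
- by apply: (iffP (IH b)) => [->|[]].
Qed.

HB.instance Definition _ := hasDecEq.Build form form_eqP.

Definition Top := Imp p p.

Fixpoint bigAnd (l : seq form) : form :=
  if l is a :: l' then And a (bigAnd l') else Top.

Lemma beval_bigAnd v vb l : beval v vb (bigAnd l) = all (beval v vb) l.
Proof. by elim: l => [|a l IH] /=; [case: (v 0)|rewrite IH]. Qed.

Ltac taut := let v := fresh "v" in let vb := fresh "vb" in
  intros v vb; rewrite /Top /Iff /Imp /p /=;
  repeat match goal with
         | |- context [beval v vb ?a] => destruct (beval v vb a)
         | |- context [vb ?a] => destruct (vb a)
         | |- context [v ?a] => destruct (v a)
         end; reflexivity.

Section Derivable.
Variable G : form -> Prop.
Local Notation D := (derivable G).

Lemma mp_taut1 a b : tautology (Imp a b) -> D a -> D b.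
Proof. by move=> t Da; exact: d_mp Da (d_taut _ t). Qed.

Lemma mp_taut2 a b c : tautology (Imp a (Imp b c)) -> D a -> D b -> D c.
Proof. by move=> t Da Db; apply: d_mp Db _; exact: d_mp Da (d_taut _ t). Qed.

Lemma derivable_imp_refl a : D (Imp a a).
Proof. by apply: d_taut; taut. Qed.

Lemma derivable_imp_trans a b c : D (Imp a b) -> D (Imp b c) -> D (Imp a c).
Proof. by apply: mp_taut2; taut. Qed.

Lemma derivable_bigAnd l : (forall a, a \in l -> D a) -> D (bigAnd l).
Proof.
elim: l => [|a l IH] Dl /=; first exact: derivable_imp_refl.
apply: (@mp_taut2 a (bigAnd l)); first by taut.
- by apply: Dl; rewrite inE eqxx.
- by apply: IH => b bl; apply: Dl; rewrite inE bl orbT.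
Qed.

Lemma derivable_bigAnd_imp (T : eqType) (f g : T -> form) (s : seq T) :
  (forall y, y \in s -> D (Imp (f y) (g y))) ->
  D (Imp (bigAnd (map f s)) (bigAnd (map g s))).
Proof.
elim: s => [|y s IH] Ds /=; first exact: derivable_imp_refl.
apply: (@mp_taut2 (Imp (f y) (g y)) (Imp (bigAnd (map f s)) (bigAnd (map g s)))).
- by taut.
- by apply: Ds; rewrite inE eqxx.
- by apply: IH => z zs; apply: Ds; rewrite inE zs orbT.
Qed.

Lemma ax4_inst : D ax4 -> forall a, D (Imp (Box a) (Box (Box a))).
Proof. by move=> D4 a; exact: (d_us (fun _ => a) D4). Qed.

Lemma axT_inst : D axT -> forall a, D (Imp (Box a) a).
Proof. by move=> DT a; exact: (d_us (fun _ => a) DT). Qed.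

Lemma axM_inst : D axM -> forall a b, D (Imp (Box (And a b)) (And (Box a) (Box b))).
Proof. by move=> DM a b; exact: (d_us (fun k => if k is 0 then a else b) DM). Qed.

Lemma axC_inst : D axC -> forall a b, D (Imp (And (Box a) (Box b)) (Box (And a b))).
Proof. by move=> DC a b; exact: (d_us (fun k => if k is 0 then a else b) DC). Qed.

(* The rule RM: RE applied to [a <-> a /\ b], followed by M. *)
Lemma derivable_Box_mono : D axM -> forall a b, D (Imp a b) -> D (Imp (Box a) (Box b)).
Proof.
move=> DM a b Dab.
have Dre : D (Iff (Box a) (Box (And a b))) by apply: d_re; apply: mp_taut1 Dab; taut.
by apply: (mp_taut2 _ Dre (axM_inst DM a b)); taut.
Qed.

Lemma derivable_Box_bigAnd : D axC -> forall l, l != [::] ->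
  D (Imp (bigAnd (map Box l)) (Box (bigAnd l))).
Proof.
move=> DC; elim=> [//|a [|b l] IH] _ /=.
- have Dre : D (Iff (Box a) (Box (And a Top))) by apply: d_re; apply: d_taut; taut.
  by apply: mp_taut1 Dre; taut.
- by apply: (mp_taut2 _ (IH isT) (axC_inst DC a (And b (bigAnd l)))); taut.
Qed.

End Derivable.

Lemma in_truth (F : finframe) (V : nat -> {set fW F}) x a :
  (x \in truth V a) = beval (fun k => x \in V k) (fun b => x \in fbox (truth V b)) a.
Proof. by elim: a => [k|a IH|a IHa b IHb|a IH] //=; rewrite !inE ?IH ?IHa ?IHb. Qed.

Lemma truth_subst (F : finframe) (V : nat -> {set fW F}) s a :
  truth V (subst s a) = truth (fun k => truth V (s k)) a.
Proof. by elim: a => [k|a IH|a IHa b IHb|a IH] //=; rewrite ?IH ?IHa ?IHb. Qed.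

Lemma validP (F : finframe) a :
  valid F a <-> forall (V : nat -> {set fW F}) x, x \in truth V a.
Proof.
split=> [Fa V x|Fa V]; first by rewrite Fa inE.
by apply/setP => x; rewrite inE Fa.
Qed.

Lemma derivable_sound (F : finframe) (G : form -> Prop) :
  (forall g, G g -> valid F g) -> forall a, derivable G a -> valid F a.
Proof.
move=> FG a; elim=> {a}.
- by move=> a t; apply/validP => V x; rewrite in_truth t.
- by move=> a /FG.
- move=> a b _ /validP Fa _ /validP Fab; apply/validP => V x.
  by move: (Fa V x) (Fab V x); rewrite /Imp /= !inE => -> /=; rewrite negbK.
- by move=> s a _ Fa V; rewrite truth_subst Fa.
- move=> a b _ /validP Fab; apply/validP => V x.
  have eab : truth V a = truth V b.
    apply/setP => y; move: (Fab V y); rewrite /Iff /Imp /= !inE.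
    by case: (y \in truth V a); case: (y \in truth V b).
  by rewrite /Iff /Imp /= eab !inE; case: (x \in _).
Qed.

Lemma valid_Imp (F : finframe) a b :
  (forall V : nat -> {set fW F}, truth V a \subset truth V b) -> valid F (Imp a b).
Proof.
move=> ab; apply/validP => V x; rewrite /Imp /= !inE.
by case xa: (x \in truth V a) => //=; rewrite negbK (subsetP (ab V)).
Qed.

Lemma ax4_valid (F : finframe) :
  (forall X : {set fW F}, fbox X \subset fbox (fbox X)) -> valid F ax4.
Proof. by move=> F4; apply: valid_Imp => V; apply: F4. Qed.

Lemma axT_valid (F : finframe) : (forall X : {set fW F}, fbox X \subset X) -> valid F axT.
Proof. by move=> FT; apply: valid_Imp => V; apply: FT. Qed.

Lemma axM_valid (F : finframe) :
  (forall X Y : {set fW F}, X \subset Y -> fbox X \subset fbox Y) -> valid F axM.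
Proof.
by move=> FM; apply: valid_Imp => V /=; rewrite subsetI !FM ?subsetIl ?subsetIr.
Qed.

Lemma axC_valid (F : finframe) :
  (forall X Y : {set fW F}, fbox X :&: fbox Y \subset fbox (X :&: Y)) -> valid F axC.
Proof. by move=> FC; apply: valid_Imp => V; apply: FC. Qed.

Lemma lplus_base L Ax f : L f -> lplus L Ax f.
Proof. by move=> Lf; apply: d_ax; left. Qed.

Lemma lplus_axiom L Ax f : Ax f -> lplus L Ax f.
Proof. by move=> Af; apply: d_ax; right. Qed.

Lemma lplus_sound (F : finframe) (L Ax : form -> Prop) :
  (forall g, L g -> valid F g) -> (forall g, Ax g -> valid F g) ->
  forall f, lplus L Ax f -> valid F f.
Proof. by move=> FL FA; apply: derivable_sound => g [/FL|/FA]. Qed.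

Lemma E_sound (F : finframe) f : E f -> valid F f.
Proof. by apply: derivable_sound => g []. Qed.

Lemma E4_sound (F : finframe) : valid F ax4 -> forall f, E4 f -> valid F f.
Proof. by move=> F4; apply: lplus_sound (@E_sound F) _ => g ->. Qed.

Lemma S04_sound (F : finframe) : valid F ax4 -> valid F axT -> valid F axM ->
  forall f, S04 f -> valid F f.
Proof. by move=> F4 FT FM; apply: lplus_sound (E4_sound F4) _ => g [->|->]. Qed.

Lemma EMC4_sound (F : finframe) : valid F ax4 -> valid F axM -> valid F axC ->
  forall f, EMC4 f -> valid F f.
Proof. by move=> F4 FM FC; apply: lplus_sound (E4_sound F4) _ => g [->|->]. Qed.

Lemma fmpI (L : form -> Prop) (C : finframe -> Prop) :
  (forall F, C F -> forall f, L f -> valid F f) ->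
  (forall f, ~ L f -> exists2 F, C F & ~ valid F f) -> fmp L.
Proof.
move=> sound complete; exists C => f; split=> [Lf F CF|Cf]; first exact: sound.
by apply: NNPP => /complete [F /Cf].
Qed.

Fixpoint subforms (a : form) : seq form :=
  a :: match a with
       | Var _ => [::]
       | Neg b => subforms b
       | And b c => subforms b ++ subforms c
       | Box b => subforms b
       end.

Lemma subforms_refl a : a \in subforms a.
Proof. by case: a => *; rewrite inE eqxx. Qed.

Lemma subforms_trans a b c : b \in subforms a -> c \in subforms b -> c \in subforms a.
Proof.
elim: a => [k|a IH|a1 IH1 a2 IH2|a IH] /=; rewrite in_cons => /orP [/eqP -> //|] //.
- by move=> /IH ab /ab; rewrite inE => ->; rewrite orbT.
- rewrite mem_cat => /orP [/IH1 ab /ab|/IH2 ab /ab];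
  by rewrite inE mem_cat => ->; rewrite ?orbT.
- by move=> /IH ab /ab; rewrite inE => ->; rewrite orbT.
Qed.

Section CanonicalModel.
Variables (G : form -> Prop) (S : seq form).
Hypothesis S_closed : forall a b, a \in S -> b \in subforms a -> b \in S.
Local Notation D := (derivable G).
Local Notation n := (size S).

Lemma S_Neg a : Neg a \in S -> a \in S.
Proof. by move/S_closed; apply; rewrite /= inE subforms_refl orbT. Qed.

Lemma S_Andl a b : And a b \in S -> a \in S.
Proof. by move/S_closed; apply; rewrite /= inE mem_cat subforms_refl orbT. Qed.

Lemma S_Andr a b : And a b \in S -> b \in S.
Proof. by move/S_closed; apply; rewrite /= inE mem_cat subforms_refl !orbT. Qed.

Lemma S_Box a : Box a \in S -> a \in S.
Proof. by move/S_closed; apply; rewrite /= inE subforms_refl orbT. Qed.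

Definition profile v vb : {ffun 'I_n -> bool} := [ffun i : 'I_n => beval v vb (nth Top S i)].

Definition atom (w : {ffun 'I_n -> bool}) : form :=
  bigAnd [seq if w i then nth Top S i else Neg (nth Top S i) | i <- enum 'I_n].

Lemma beval_atom v vb w : beval v vb (atom w) = (profile v vb == w).
Proof.
rewrite beval_bigAnd all_map; apply/allP/eqP => [wv|<- i _ /=].
- apply/ffunP => i; rewrite ffunE; have /= := wv i (mem_enum _ i).
  by case: (w i) => //= /negbTE.
- by rewrite ffunE; case e: (beval v vb (nth Top S i)) => /=; rewrite e.
Qed.

Definition consistent w : bool :=
  if excluded_middle_informative (D (Neg (atom w))) then false else true.

Lemma consistentP w : reflect (~ D (Neg (atom w))) (consistent w).
Proof. by rewrite /consistent; case: excluded_middle_informative; constructor. Qed.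

(* Only finitely many profiles exist, so the conjunction of the negated
   atoms of all inconsistent profiles is a single theorem. *)
Lemma derivable_of_consistent g :
  (forall v vb, consistent (profile v vb) -> beval v vb g) -> D g.
Proof.
move=> Cg; pose refuted := [seq Neg (atom w) | w <- enum (predC consistent)].
have Drefuted : D (bigAnd refuted).
  apply: derivable_bigAnd => a /mapP [w]; rewrite mem_enum inE => /consistentP nw ->.
  exact: NNPP.
apply: mp_taut1 Drefuted => v vb /=; rewrite beval_bigAnd.
case: (boolP (consistent (profile v vb))) => [/Cg -> | nc]; first by rewrite andbF.
suff /negbTE -> : ~~ all (beval v vb) refuted by [].
apply/allPn; exists (Neg (atom (profile v vb))); last by rewrite /= beval_atom eqxx.
by apply/mapP; exists (profile v vb); rewrite ?mem_enum ?inE.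
Qed.

Lemma consistent_sat w g : consistent w -> D g -> exists v vb, profile v vb = w /\ beval v vb g.
Proof.
move=> /consistentP cw Dg; apply: NNPP => nsat; apply: cw; apply: mp_taut1 Dg => v vb /=.
rewrite beval_atom negbK; case: eqP => [pw|]; last by rewrite andbF.
by rewrite andbT; apply/negP => gv; apply: nsat; exists v, vb.
Qed.

Definition world : finType := {w : {ffun 'I_n -> bool} | consistent w}.

Definition holds (w : {ffun 'I_n -> bool}) a : bool :=
  if @insub _ _ 'I_n (index a S) is Some i then w i else false.

Implicit Types (X Y : {set world}) (I : {set {set world}}).

Definition tset a : {set world} := [set x : world | holds (val x) a].

Lemma world_profile (x : world) : exists v vb, profile v vb = val x.
Proof.
have [v [vb [e _]]] := consistent_sat (valP x) (derivable_imp_refl G p).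
by exists v, vb.
Qed.

Lemma in_tset (x : world) v vb a :
  profile v vb = val x -> a \in S -> (x \in tset a) = beval v vb a.
Proof.
move=> e aS; rewrite inE -e /holds; case: insubP => [i _ ei|]; last by rewrite index_mem aS.
by rewrite ffunE ei nth_index.
Qed.

Lemma tset_Neg a : Neg a \in S -> tset (Neg a) = ~: tset a.
Proof.
move=> naS; apply/setP => x; have [v [vb e]] := world_profile x.
by rewrite in_setC !(in_tset e) //; exact: S_Neg naS.
Qed.

Lemma tset_And a b : And a b \in S -> tset (And a b) = tset a :&: tset b.
Proof.
move=> abS; apply/setP => x; have [v [vb e]] := world_profile x.
by rewrite in_setI !(in_tset e) //; [exact: S_Andr abS | exact: S_Andl abS].
Qed.

Lemma tset_bigAnd_subsetE l b : {subset l <= S} -> b \in S ->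
  (forall x, all (fun a => x \in tset a) l -> x \in tset b) <-> D (Imp (bigAnd l) b).
Proof.
move=> lS bS.
have all_tset x v vb : profile v vb = val x ->
    all (fun a => x \in tset a) l = all (beval v vb) l.
  by move=> e; apply: eq_in_all => a /lS; exact: in_tset e.
split=> [lb | Dlb x].
- apply: derivable_of_consistent => v vb c; pose x : world := exist _ (profile v vb) c.
  rewrite /= beval_bigAnd -(in_tset (x := x)) // -(all_tset x) //.
  by case: (boolP (all _ l)) => // /lb ->.
- have [v [vb [e]]] := consistent_sat (valP x) Dlb.
  rewrite /= beval_bigAnd (in_tset e bS) (all_tset x v vb e).
  by case: (all _ l); case: (beval v vb b).
Qed.

Lemma tset_subsetE a b : a \in S -> b \in S -> tset a \subset tset b <-> D (Imp a b).
Proof.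
move=> aS bS; have aS' : {subset [:: a] <= S} by move=> c; rewrite inE => /eqP ->.
split=> [/subsetP ab | Dab].
- apply: (mp_taut1 (a := Imp (bigAnd [:: a]) b)); first by taut.
  by apply/tset_bigAnd_subsetE => // x /=; rewrite andbT; exact: ab.
- apply/subsetP => x xa; apply: (proj2 (tset_bigAnd_subsetE aS' bS)); last by rewrite /= xa.
  by apply: mp_taut1 Dab; taut.
Qed.

Lemma tset_eqE a b : a \in S -> b \in S -> tset a = tset b <-> D (Iff a b).
Proof.
move=> aS bS; split=> [eab | Dab].
- by apply: (mp_taut2 (a := Imp a b) (b := Imp b a)); [taut | apply/tset_subsetE; rewrite ?eab..].
- apply/eqP; rewrite eqEsubset; apply/andP; split; apply/tset_subsetE => //;
  by apply: mp_taut1 Dab; taut.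
Qed.

Definition agrees (box : {set world} -> {set world}) :=
  forall a, Box a \in S -> box (tset a) = tset (Box a).

Section Countermodel.
Variable f0 : form.
Hypotheses (f0S : f0 \in S) (nf0 : ~ D f0).

Lemma refuting_world : exists x : world, x \notin tset f0.
Proof.
apply: NNPP => nx; apply: nf0; apply: derivable_of_consistent => v vb c.
pose x : world := exist _ (profile v vb) c.
rewrite -(in_tset (x := x)) //; apply: NNPP => /negP xf0; apply: nx; by exists x.
Qed.

Lemma world_nonempty : 0 < #|world|.
Proof. by have [x _] := refuting_world; apply/card_gt0P; exists x. Qed.

Definition canonical_frame box := FinFrame box world_nonempty.

Lemma truth_canonical box a : agrees box -> a \in S ->
  @truth (canonical_frame box) (fun k => tset (Var k)) a = tset a.
Proof.
move=> box_tset; elim: a => [k|a IH|a IHa b IHb|a IH] //= aS.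
- by rewrite IH ?tset_Neg //; exact: S_Neg aS.
- by rewrite IHa ?IHb ?tset_And //; [exact: S_Andr aS | exact: S_Andl aS].
- by rewrite IH ?box_tset //; exact: S_Box aS.
Qed.

Lemma canonical_refutes box : agrees box -> ~ valid (canonical_frame box) f0.
Proof.
move=> box_tset /(_ (fun k => tset (Var k))); rewrite truth_canonical // => e.
by have [x] := refuting_world; rewrite e inE.
Qed.

End Countermodel.

Definition defines_box X a := (Box a \in S) && (X == tset a).
Definition defines_boxed X c := (Box c \in S) && (X == tset (Box c)).
Definition box_definable X := has (defines_box X) S.
Definition boxed_definable X := has (defines_boxed X) S.
Definition special X := box_definable X || boxed_definable X.

Definition box_arg X := nth Top S (find (defines_box X) S).
Definition boxed_arg X := nth Top S (find (defines_boxed X) S).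

(* If [X] is the extension of some [a] with [Box a] in [S], [sbox X] has to be the
   extension of [Box a].  Otherwise [X] is the extension of some [Box c] and [sbox X]
   is [X] itself: making such sets necessary exactly where they hold is what
   validates axiom 4. *)
Definition sarg X := if box_definable X then box_arg X else boxed_arg X.
Definition sform X := if box_definable X then box_arg X else Box (boxed_arg X).
Definition sbox X := tset (Box (sarg X)).

Lemma box_argP X : box_definable X ->
  [/\ box_arg X \in S, Box (box_arg X) \in S & tset (box_arg X) = X].
Proof.
move=> bX; have /andP [BaS /eqP eX] := nth_find Top bX.
by split=> //; apply: mem_nth; rewrite -has_find.
Qed.

Lemma boxed_argP X : boxed_definable X ->
  [/\ boxed_arg X \in S, Box (boxed_arg X) \in S & tset (Box (boxed_arg X)) = X].
Proof.
move=> bX; have /andP [BaS /eqP eX] := nth_find Top bX.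
by split=> //; apply: mem_nth; rewrite -has_find.
Qed.

Lemma specialP X : special X ->
  [/\ sarg X \in S, Box (sarg X) \in S, sform X \in S & tset (sform X) = X].
Proof.
by rewrite /special /sarg /sform; case: ifP => [/box_argP [] | _ /boxed_argP []].
Qed.

Lemma box_definable_tset a : Box a \in S -> box_definable (tset a).
Proof. by move=> BaS; apply/hasP; exists a; [exact: S_Box | rewrite /defines_box BaS eqxx]. Qed.

Lemma special_tset a : Box a \in S -> special (tset a).
Proof. by move=> BaS; rewrite /special box_definable_tset. Qed.

Lemma boxed_definable_tset c : Box c \in S -> boxed_definable (tset (Box c)).
Proof. by move=> BcS; apply/hasP; exists c; [exact: S_Box | rewrite /defines_boxed BcS eqxx]. Qed.

Lemma special_tset_Box c : Box c \in S -> special (tset (Box c)).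
Proof. by move=> BcS; apply/orP; right; exact: boxed_definable_tset. Qed.

Lemma special_sbox X : special X -> special (sbox X).
Proof. by case/specialP => _ BcS _ _; exact: special_tset_Box. Qed.

Lemma sbox_tset a : Box a \in S -> sbox (tset a) = tset (Box a).
Proof.
move=> BaS; have bd := box_definable_tset BaS.
have [bS BbS eab] := box_argP bd; rewrite /sbox /sarg bd.
apply/tset_eqE; [exact: BbS | exact: BaS | apply: d_re].
by apply/tset_eqE; [exact: bS | exact: S_Box | exact: eab].
Qed.

Hypothesis D4 : D ax4.

Lemma derivable_sarg_sform X : D (Imp (Box (sarg X)) (Box (sform X))).
Proof. by rewrite /sarg /sform; case: ifP => _; [exact: derivable_imp_refl | exact: ax4_inst]. Qed.

Lemma sbox_4 X : special X -> sbox X \subset sbox (sbox X).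
Proof.
case/specialP => _ BcS _ _; set c := sarg X.
have -> : sbox X = tset (Box c) by [].
rewrite /sbox /sarg; case: ifP => [bd | _].
- have [bS BbS ebc] := box_argP bd.
  apply/tset_subsetE; [exact: BcS | exact: BbS |].
  apply: derivable_imp_trans (ax4_inst D4 c) _.
  have Dre : D (Iff (Box (Box c)) (Box (box_arg (tset (Box c))))).
    by apply: d_re; apply/tset_eqE; [exact: BcS | exact: bS | exact: esym].
  by apply: mp_taut1 Dre; taut.
- by have [_ _ ->] := boxed_argP (boxed_definable_tset BcS).
Qed.

Lemma sbox_subset : D axM -> forall X a, special X -> Box a \in S ->
  X \subset tset a -> sbox X \subset tset (Box a).
Proof.
move=> DM X a /specialP [_ BcS fS eX] BaS; rewrite -{1}eX /sbox => /tset_subsetE Dfa.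
apply/tset_subsetE; [exact: BcS | exact: BaS |].
apply: derivable_imp_trans (derivable_sarg_sform X) _; apply: (derivable_Box_mono DM).
by apply: Dfa; [exact: fS | exact: S_Box].
Qed.

Lemma sbox_T : D axT -> forall X, special X -> sbox X \subset X.
Proof.
move=> DT X /specialP [_ BcS fS eX]; rewrite -{2}eX /sbox.
apply/tset_subsetE; [exact: BcS | exact: fS |].
exact: derivable_imp_trans (derivable_sarg_sform X) (axT_inst DT _).
Qed.

Definition boxE4 X := if special X then sbox X else set0.

Lemma boxE4_agrees : agrees boxE4.
Proof. by move=> a BaS; rewrite /boxE4 special_tset // sbox_tset. Qed.

Lemma boxE4_4 X : boxE4 X \subset boxE4 (boxE4 X).
Proof.
rewrite /boxE4; case: ifP => sX; last exact: sub0set.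
by rewrite special_sbox // sbox_4.
Qed.

Definition boxS04 X := \bigcup_(Y | special Y && (Y \subset X)) sbox Y.

Lemma boxS04_mono X X' : X \subset X' -> boxS04 X \subset boxS04 X'.
Proof.
move=> XX'; apply/bigcupsP => Y /andP [sY YX]; apply: bigcup_sup.
by rewrite sY (subset_trans YX XX').
Qed.

Lemma boxS04_T : D axT -> forall X, boxS04 X \subset X.
Proof.
by move=> DT X; apply/bigcupsP => Y /andP [sY YX]; exact: subset_trans (sbox_T DT sY) YX.
Qed.

Lemma boxS04_4 X : boxS04 X \subset boxS04 (boxS04 X).
Proof.
apply/bigcupsP => Y /andP [sY YX].
have YX' : sbox Y \subset boxS04 X by apply: bigcup_sup; rewrite sY.
by apply: (bigcup_max (sbox Y)); [rewrite special_sbox | exact: sbox_4].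
Qed.

Lemma boxS04_agrees : D axM -> agrees boxS04.
Proof.
move=> DM a BaS; apply/eqP; rewrite eqEsubset; apply/andP; split.
- by apply/bigcupsP => Y /andP [sY Ya]; exact: sbox_subset.
- by rewrite -sbox_tset //; apply: bigcup_sup; rewrite special_tset ?subxx.
Qed.

Definition special_family X I :=
  [&& I != set0, [forall Y in I, special Y] & \bigcap_(Y in I) Y \subset X].

Definition boxEMC4 X : {set world} := \bigcup_(I | special_family X I) \bigcap_(Y in I) sbox Y.

Lemma boxEMC4_mono X X' : X \subset X' -> boxEMC4 X \subset boxEMC4 X'.
Proof.
move=> XX'; apply/bigcupsP => I /and3P [I0 sI IX]; apply: bigcup_sup.
by rewrite /special_family I0 sI (subset_trans IX XX').
Qed.

Lemma boxEMC4_C X X' : boxEMC4 X :&: boxEMC4 X' \subset boxEMC4 (X :&: X').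
Proof.
apply/subsetP => x /setIP [/bigcupP [I /and3P [I0 /forall_inP sI IX] xI]].
move=> /bigcupP [J /and3P [_ /forall_inP sJ JX'] xJ].
apply/bigcupP; exists (I :|: J); last by rewrite bigcap_setU inE xI.
apply/and3P; split.
- by rewrite setU_eq0 negb_and I0.
- by apply/forall_inP => Y /setUP [/sI | /sJ].
- by rewrite bigcap_setU subsetI !(subset_trans _ IX, subset_trans _ JX') ?subsetIl ?subsetIr.
Qed.

Lemma boxEMC4_4 X : boxEMC4 X \subset boxEMC4 (boxEMC4 X).
Proof.
apply/bigcupsP => I /and3P [I0 /forall_inP sI IX].
apply: (bigcup_max (sbox @: I)).
- apply/and3P; split.
  + by rewrite imset_eq0.
  + by apply/forall_inP => _ /imsetP [Y YI ->]; exact: special_sbox (sI Y YI).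
  + have fI : special_family X I by rewrite /special_family I0 IX andbT; apply/forall_inP.
    apply: subset_trans (bigcup_sup _ fI); apply/bigcapsP => Y YI.
    by apply: bigcap_inf; exact: imset_f.
- apply/bigcapsP => _ /imsetP [Y YI ->].
  exact: bigcap_min YI (sbox_4 (sI Y YI)).
Qed.

Lemma bigcap_sbox_subset : D axM -> D axC -> forall I a, Box a \in S ->
  special_family (tset a) I -> \bigcap_(Y in I) sbox Y \subset tset (Box a).
Proof.
move=> DM DC I a BaS /and3P [I0 /forall_inP sI IX]; pose L := enum I.
have LS Y : Y \in L -> special Y by rewrite mem_enum; exact: sI.
have Dsa : D (Imp (bigAnd (map sform L)) a).
  apply/tset_bigAnd_subsetE; [|exact: S_Box|].
    by move=> f /mapP [Y /LS /specialP [_ _ fS _] ->].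
  move=> x; rewrite all_map => /allP xL; apply: (subsetP IX); apply/bigcapP => Y YI.
  by have [_ _ _ <-] := specialP (sI Y YI); apply: xL; rewrite mem_enum.
have L0 : map sform L != [::].
  by case/set0Pn: I0 => Y YI; apply/eqP => /(congr1 size); rewrite size_map -cardE (cardD1 Y) YI.
have Dsb : D (Imp (bigAnd (map (Box \o sarg) L)) (Box a)).
  apply: derivable_imp_trans (derivable_bigAnd_imp (g := Box \o sform) _) _.
    by move=> Y _; exact: derivable_sarg_sform.
  rewrite map_comp; apply: derivable_imp_trans (derivable_Box_bigAnd DC L0) _.
  exact: derivable_Box_mono.
apply/subsetP => x xI; apply: (proj2 (tset_bigAnd_subsetE _ BaS) Dsb).
  by move=> f /mapP [Y /LS /specialP [_ BcS _ _] ->].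
by rewrite all_map; apply/allP => Y; rewrite mem_enum => YI; exact: (bigcapP xI).
Qed.

Lemma boxEMC4_agrees : D axM -> D axC -> agrees boxEMC4.
Proof.
move=> DM DC a BaS; apply/eqP; rewrite eqEsubset; apply/andP; split.
- by apply/bigcupsP => I; exact: bigcap_sbox_subset.
- rewrite -sbox_tset //; apply: (bigcup_max [set tset a]); last by rewrite big_set1.
  rewrite /special_family big_set1 subxx andbT; apply/andP; split.
  + by apply/set0Pn; exists (tset a); rewrite inE.
  + by apply/forall_inP => Y /set1P ->; exact: special_tset.
Qed.

End CanonicalModel.

Lemma E4_complete f : ~ E4 f -> exists2 F, valid F ax4 & ~ valid F f.
Proof.
move=> nf; have D4 : E4 ax4 by apply: lplus_axiom.
have S_closed := @subforms_trans f.
exists (canonical_frame (subforms_refl f) nf (boxE4 (S := subforms f))).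
- by apply: ax4_valid; exact: boxE4_4.
- by apply: (canonical_refutes S_closed); exact: boxE4_agrees.
Qed.

Lemma S04_complete f : ~ S04 f ->
  exists2 F, [/\ valid F ax4, valid F axT & valid F axM] & ~ valid F f.
Proof.
move=> nf; have S_closed := @subforms_trans f.
have D4 : S04 ax4 by apply/lplus_base/lplus_axiom.
have DT : S04 axT by apply: lplus_axiom; left.
have DM : S04 axM by apply: lplus_axiom; right.
exists (canonical_frame (subforms_refl f) nf (boxS04 (S := subforms f))).
- split; [apply: ax4_valid | apply: axT_valid | apply: axM_valid].
  + exact: boxS04_4.
  + exact: boxS04_T.
  + exact: boxS04_mono.
- by apply: (canonical_refutes S_closed); exact: boxS04_agrees.
Qed.

Lemma EMC4_complete f : ~ EMC4 f ->
  exists2 F, [/\ valid F ax4, valid F axM & valid F axC] & ~ valid F f.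
Proof.
move=> nf; have S_closed := @subforms_trans f.
have D4 : EMC4 ax4 by apply/lplus_base/lplus_axiom.
have DM : EMC4 axM by apply: lplus_axiom; left.
have DC : EMC4 axC by apply: lplus_axiom; right.
exists (canonical_frame (subforms_refl f) nf (boxEMC4 (S := subforms f))).
- split; [apply: ax4_valid | apply: axM_valid | apply: axC_valid].
  + exact: boxEMC4_4.
  + exact: boxEMC4_mono.
  + exact: boxEMC4_C.
- by apply: (canonical_refutes S_closed); exact: boxEMC4_agrees.
Qed.

Theorem mainTheorem2 : fmp E4 /\ fmp S04 /\ fmp EMC4.
Proof.
split; [|split].
- exact: fmpI E4_sound E4_complete.
- by apply: fmpI S04_complete => F [F4 FT FM]; exact: S04_sound.
- by apply: fmpI EMC4_complete => F [F4 FM FC]; exact: EMC4_sound.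
Qed.
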